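(* Let $D=\operatorname{diag}(d_1,\dots,d_n)$ with $d_i>0$, $Q$ a positive diagonal $n\times n$ matrix, $1\le p\le\infty$, and $L\in\mathbb{R}^{N\times N}$ symmetric with nonpositive off-diagonal entries and $L\mathbf{1}=0$. Then $M^+_{p,Q}[-L\otimes D]=0$.
   Context: On $\mathbb{R}^{nN}$, with $u=(u_1^T,\dots,u_N^T)^T$, $\|u\|_{p,Q}=\big\|(\|Qu_1\|_p,\dots,\|Qu_N\|_p)^T\big\|_p$, and $M^+_{p,Q}[f]=\sup_{u\neq v}\lim_{h\to0^+}\frac1h\left(\frac{\|u-v+h(f(u)-f(v))\|_{p,Q}}{\|u-v\|_{p,Q}}-1\right)$, applied to the linear map $u\mapsto-(L\otimes D)u$. *)

From HB Require Import structures.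
From mathcomp Require Import all_boot all_order all_algebra.
From mathcomp Require Import all_classical all_reals all_analysis.
From mathcomp Require Import mxtens.
Set Implicit Arguments. Unset Strict Implicit. Unset Printing Implicit Defensive.
Import Order.TTheory GRing.Theory Num.Theory.
Import numFieldNormedType.Exports.
Local Open Scope classical_set_scope.
Local Open Scope ring_scope.

Section Defs.
Variable R : realType.

Definition pnorm (p : \bar R) (k : nat) (x : 'cV[R]_k) : R :=
  match p with
  | +oo%E => \big[Num.max/0]_(i < k) `|x i 0|
  | r%:E => (\sum_(i < k) `|x i 0| `^ r) `^ r^-1
  | -oo%E => 0 (* never used: p >= 1 *)
  end.

(* the a-th block u_a in R^n of u = (u_1^T, ..., u_N^T)^T in R^{nN};
   indexing consistent with the Kronecker product *t (index a*n+i) *)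
Definition blk (N n : nat) (u : 'cV[R]_(N * n)) (a : 'I_N) : 'cV[R]_n :=
  \col_i u (mxtens_index (a, i)) 0.

Definition wnorm (p : \bar R) (N n : nat) (Q : 'M[R]_n) (u : 'cV[R]_(N * n)) : R :=
  pnorm p (\col_(a < N) pnorm p (Q *m blk u a)).

Definition Mquot (p : \bar R) (N n : nat) (Q : 'M[R]_n)
  (f : 'cV[R]_(N * n) -> 'cV[R]_(N * n)) (u v : 'cV[R]_(N * n)) (h : R) : R :=
  h^-1 * (wnorm p Q (u - v + h *: (f u - f v)) / wnorm p Q (u - v) - 1).

Definition Mplus (p : \bar R) (N n : nat) (Q : 'M[R]_n)
  (f : 'cV[R]_(N * n) -> 'cV[R]_(N * n)) : \bar R :=
  ereal_sup [set (lim (Mquot p Q f uv.1 uv.2 h @[h --> 0^'+]))%:E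
            | uv in [set uv : 'cV[R]_(N * n) * 'cV[R]_(N * n) | uv.1 != uv.2]].
End Defs.

From HB Require Import structures.
From mathcomp Require Import all_boot all_order all_algebra.
From mathcomp Require Import all_classical all_reals all_analysis.
From mathcomp Require Import mxtens.
From mathcomp Require Import ring lra.
Import Order.TTheory GRing.Theory Num.Theory.
Import numFieldNormedType.Exports.
Local Open Scope classical_set_scope.
Local Open Scope ring_scope.

(* Write [T = L *t D] and [W = 1 *t Q], so that [|u|_{p,Q}] is the l^p norm of
   [W u].  For any seminorm the one-sided difference quotient
   [(|x + h y| / |x| - 1) / h] is nondecreasing in [h] by convexity, so its limit
   at [0+] exists and is bounded by its value at any [h > 0].  [T] has
   nonpositive off-diagonal entries and zero row and column sums, so [1 - h T]
   is doubly stochastic for small [h > 0]; it commutes with [W] because [Q] and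
   [D] are diagonal, and by Jensen's inequality a doubly stochastic matrix does
   not increase the l^p norm.  Hence all quotients at that [h] are [<= 0], and
   the value [0] is attained at [u = 1], [v = 0] since [T 1 = 0]. *)

Definition norm_quot {R : realType} {V : lmodType R} (nu : V -> R) (x y : V) (h : R) :=
  h^-1 * (nu (x + h *: y) / nu x - 1).

Section NormQuotient.
Context {R : realType} {V : lmodType R} {nu : V -> R}.
Hypothesis nuD : forall x y, nu (x + y) <= nu x + nu y.
Hypothesis nuZ : forall (c : R) x, nu (c *: x) = `|c| * nu x.

Context {x y : V}.
Hypothesis nux_gt0 : 0 < nu x.

Lemma norm_quotE h : 0 < h ->
  norm_quot nu x y h = (nu (x + h *: y) - nu x) / (h * nu x).
Proof. by move=> h0; rewrite /norm_quot; field; rewrite !gt_eqF. Qed.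

(* [h |-> nu (x + h y)] is convex, so its difference quotients at [0] increase. *)
Lemma le_norm_quot s t : 0 < s -> s <= t -> norm_quot nu x y s <= norm_quot nu x y t.
Proof.
move=> s0 st; have t0 : 0 < t := lt_le_trans s0 st.
have convex : nu (x + s *: y) <= (1 - s / t) * nu x + (s / t) * nu (x + t *: y).
  have -> : x + s *: y = (1 - s / t) *: x + (s / t) *: (x + t *: y).
    by rewrite scalerDr scalerA mulfVK ?gt_eqF // scalerBl scale1r addrA subrK.
  apply: (le_trans (nuD _ _)); rewrite !nuZ ger0_norm ?ger0_norm //.
    by rewrite divr_ge0 // ltW.
  by rewrite subr_ge0 ler_pdivrMr // mul1r.
rewrite !norm_quotE // ler_pdivrMr ?mulr_gt0 //.
have -> : (nu (x + t *: y) - nu x) / (t * nu x) * (s * nu x)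
    = s / t * (nu (x + t *: y) - nu x) by field; rewrite !gt_eqF.
by rewrite mulrBr; lra.
Qed.

Lemma norm_quot_ge h : 0 < h -> - (nu y / nu x) <= norm_quot nu x y h.
Proof.
move=> h0; have : nu x <= nu (x + h *: y) + h * nu y.
  have := nuD (x + h *: y) ((- h) *: y).
  by rewrite nuZ normrN ger0_norm ?(ltW h0) // scaleNr addrK.
rewrite norm_quotE // ler_pdivlMr ?mulr_gt0 //.
have -> : - (nu y / nu x) * (h * nu x) = - (h * nu y) by field; rewrite gt_eqF.
lra.
Qed.

Let norm_quot_lbound : has_lbound (norm_quot nu x y @` [set` `]0, +oo[%R]).
Proof.
by exists (- (nu y / nu x)) => _ [h + <-]; rewrite /= in_itv /= andbT; exact: norm_quot_ge.
Qed.

Lemma norm_quot_cvg :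
  norm_quot nu x y h @[h --> 0^'+] --> inf (norm_quot nu x y @` [set` `]0, +oo[%R]).
Proof.
apply: nondecreasing_at_right_cvgr => //.
by move=> s t; rewrite !in_itv /= !andbT => s0 _; exact: le_norm_quot.
Qed.

Lemma is_cvg_norm_quot : cvg (norm_quot nu x y h @[h --> 0^'+]).
Proof. by apply/cvg_ex; eexists; exact: norm_quot_cvg. Qed.

Lemma lim_norm_quot_le {h} : 0 < h ->
  lim (norm_quot nu x y t @[t --> 0^'+]) <= norm_quot nu x y h.
Proof.
move=> h0; rewrite (cvg_lim _ norm_quot_cvg) //.
by apply: ge_inf; [exact: norm_quot_lbound | exists h; rewrite //= in_itv /= andbT].
Qed.

Lemma lim_norm_quot_le0 {h} : 0 < h -> nu (x + h *: y) <= nu x ->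
  lim (norm_quot nu x y t @[t --> 0^'+]) <= 0.
Proof.
move=> h0 le_nu; apply: le_trans (lim_norm_quot_le h0) _.
by rewrite norm_quotE // pmulr_lle0 ?invr_gt0 ?mulr_gt0 // subr_le0.
Qed.

End NormQuotient.

Section Jensen.
Context {R : realType}.

(* Young's inequality [a b <= a^r/r + b^q/q] with [a = y i], [b = mu^(r-1)] and
   [q = r/(r-1)], averaged against [w]. *)
Lemma jensen_powR {I : finType} (w y : I -> R) {r} : 1 <= r ->
  (forall i, 0 <= w i) -> \sum_i w i = 1 -> (forall i, 0 <= y i) ->
  (\sum_i w i * y i) `^ r <= \sum_i w i * y i `^ r.
Proof.
move=> r1 w0 w1 y0; have r0 : 0 < r := lt_le_trans ltr01 r1.
set mu := \sum_i w i * y i.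
have mu0 : 0 <= mu by apply: sumr_ge0 => i _; apply: mulr_ge0.
have [->|rn1] := eqVneq r 1.
  by rewrite powRr1 //; apply: ler_sum => i _; rewrite powRr1.
have rm1 : 0 < r - 1 by rewrite subr_gt0 lt_neqAle eq_sym rn1.
pose q := r / (r - 1).
have q0 : 0 < q by rewrite divr_gt0.
have rq : r^-1 + q^-1 = 1 by rewrite /q invf_div; field; rewrite gt_eqF.
have young i : y i * mu `^ (r - 1) <= y i `^ r / r + mu `^ r / q.
  have <- : (mu `^ (r - 1)) `^ q = mu `^ r.
    by rewrite -powRrM; congr (_ `^ _); rewrite /q; field; rewrite gt_eqF.
  by apply: conjugate_powR => //; apply: powR_ge0.
have mu_r : mu `^ r = \sum_i w i * (y i * mu `^ (r - 1)).
  rewrite -mulr_powRB1 // {1}/mu mulr_suml.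
  by apply: eq_bigr => i _; rewrite mulrA.
have : mu `^ r <= (\sum_i w i * y i `^ r) / r + mu `^ r / q.
  rewrite {1}mu_r; apply: le_trans (ler_sum _ (fun i _ => ler_wpM2l (w0 i) (young i))) _.
  under eq_bigr do rewrite mulrDr !mulrA.
  by rewrite big_split /= -!mulr_suml w1 mul1r.
have -> : mu `^ r / q = mu `^ r - mu `^ r / r by rewrite -[q^-1](addKr r^-1) rq; ring.
by rewrite addrC -lerBlDl opprB addrC subrK ler_pM2r ?invr_gt0.
Qed.

Lemma powR_conv2 (l u v r : R) : 1 <= r -> 0 <= l <= 1 -> 0 <= u -> 0 <= v ->
  (l * u + (1 - l) * v) `^ r <= l * u `^ r + (1 - l) * v `^ r.
Proof.
move=> r1 /andP[l0 l1] u0 v0.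
have := jensen_powR (fun b => if b then l else 1 - l) (fun b => if b then u else v) r1.
rewrite !big_bool /=; apply; [by case; rewrite // subr_ge0 | by rewrite subrKC | by case].
Qed.

End Jensen.

Section PNorm.
Context {R : realType} {k : nat}.
Implicit Types (x z : 'cV[R]_k) (P : 'M[R]_k).

Definition doubly_stochastic P := [/\ forall i j, 0 <= P i j,
  forall i, \sum_j P i j = 1 & forall j, \sum_i P i j = 1].

Lemma norm_mulmx_le P x i : (forall i j, 0 <= P i j) ->
  `|(P *m x) i 0| <= \sum_j P i j * `|x j 0|.
Proof.
move=> P0; rewrite mxE; apply: le_trans (ler_norm_sum _ _ _) _.
by apply: ler_sum => j _; rewrite normrM ger0_norm.
Qed.

Section Finite.
Variable r : R.
Hypothesis r1 : 1 <= r.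
Let r0 : 0 < r. Proof. exact: lt_le_trans ltr01 r1. Qed.
Local Notation S x := (\sum_i `|x i 0| `^ r).

Let S_ge0 x : 0 <= S x. Proof. by apply: sumr_ge0 => i _; apply: powR_ge0. Qed.

Let powRVK {a : R} : 0 <= a -> (a `^ r^-1) `^ r = a.
Proof. by move=> a0; rewrite -powRrM mulVf ?gt_eqF // powRr1. Qed.

Let powRKV {a : R} : 0 <= a -> (a `^ r) `^ r^-1 = a.
Proof. by move=> a0; rewrite -powRrM mulfV ?gt_eqF // powRr1. Qed.

Let pnorm_powR x : pnorm r%:E x `^ r = S x. Proof. exact: powRVK. Qed.

Let le_pnorm x z : S x <= S z -> pnorm r%:E x <= pnorm r%:E z.
Proof. by move=> le_S; apply: ge0_ler_powR; rewrite ?nnegrE ?invr_ge0 // ltW. Qed.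

Lemma pnormZ_fin c x : pnorm r%:E (c *: x) = `|c| * pnorm r%:E x.
Proof.
rewrite /pnorm (eq_bigr (fun i => `|c| `^ r * `|x i 0| `^ r)); last first.
  by move=> i _; rewrite mxE normrM powRM.
by rewrite -mulr_sumr powRM ?powR_ge0 // powRKV.
Qed.

Lemma pnorm_gt0_fin x : x != 0 -> 0 < pnorm r%:E x.
Proof.
case/matrix0Pn => i [j]; rewrite [j]ord1 -normr_gt0 => xi0.
apply: powR_gt0; rewrite (bigD1 i) //= ltr_pwDl ?powR_gt0 //.
by apply: sumr_ge0 => l _; apply: powR_ge0.
Qed.

Let pnorm0 : pnorm r%:E (0 : 'cV[R]_k) = 0.
Proof. by have := pnormZ_fin 0 0; rewrite scale0r normr0 mul0r. Qed.

Let S_normalized x : 0 < pnorm r%:E x -> S ((pnorm r%:E x)^-1 *: x) = 1.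
Proof.
move=> x0; rewrite -pnorm_powR pnormZ_fin ger0_norm ?invr_ge0 ?(ltW x0) //.
by rewrite mulVf ?gt_eqF // powR1.
Qed.

(* With [a = |x|], [b = |z|] and [l = a / (a + b)], the vector [x + z] is
   [(a + b)] times the convex combination of the unit vectors [x/a] and [z/b]
   with weights [l] and [1 - l]; convexity of [t^r] bounds [S (x + z)]. *)
Lemma pnormD_fin x z : pnorm r%:E (x + z) <= pnorm r%:E x + pnorm r%:E z.
Proof.
have [->|/pnorm_gt0_fin a0] := eqVneq x 0; first by rewrite add0r pnorm0 add0r.
have [->|/pnorm_gt0_fin b0] := eqVneq z 0; first by rewrite addr0 pnorm0 addr0.
move: a0 b0; move Ea : (pnorm r%:E x) => a; move Eb : (pnorm r%:E z) => b a0 b0.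
have ab0 : 0 < a + b by rewrite addr_gt0.
pose l := a / (a + b).
have l0 : 0 <= l by rewrite divr_ge0 // ltW.
have l1 : l <= 1 by rewrite ler_pdivrMr // mul1r lerDl ltW.
have entry i : `|(x + z) i 0| `^ r <= (a + b) `^ r *
    (l * `|(a^-1 *: x) i 0| `^ r + (1 - l) * `|(b^-1 *: z) i 0| `^ r).
  have split : `|x i 0| + `|z i 0| =
      (a + b) * (l * `|(a^-1 *: x) i 0| + (1 - l) * `|(b^-1 *: z) i 0|).
    rewrite !mxE !normrM !normfV (gtr0_norm a0) (gtr0_norm b0) /l; field.
    by rewrite !gt_eqF.
  rewrite mxE; apply: le_trans (ge0_ler_powR (ltW r0) _ _ (ler_normD _ _)) _.
  - by rewrite nnegrE.
  - by rewrite nnegrE addr_ge0.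
  have le_split : 0 <= l * `|(a^-1 *: x) i 0| + (1 - l) * `|(b^-1 *: z) i 0|.
    by rewrite addr_ge0 // mulr_ge0 // subr_ge0.
  rewrite split powRM // ?(ltW ab0) // ler_wpM2l ?powR_ge0 // powR_conv2 //.
  by rewrite l0.
have Sx1 : S (a^-1 *: x) = 1 by rewrite -Ea S_normalized // Ea.
have Sz1 : S (b^-1 *: z) = 1 by rewrite -Eb S_normalized // Eb.
have le_S : S (x + z) <= (a + b) `^ r.
  apply: le_trans (ler_sum _ (fun i _ => entry i)) _.
  by rewrite -mulr_sumr big_split /= -!mulr_sumr Sx1 Sz1 !mulr1 subrKC mulr1.
rewrite -(powRKV (ltW ab0)); apply: ge0_ler_powR; rewrite ?nnegrE ?invr_ge0 ?powR_ge0 //.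
exact: ltW.
Qed.

Lemma pnorm_doubly_stochastic_fin P x : doubly_stochastic P -> pnorm r%:E (P *m x) <= pnorm r%:E x.
Proof.
case=> P0 Prow Pcol; apply: le_pnorm.
apply: (@le_trans _ _ (\sum_i \sum_j P i j * `|x j 0| `^ r)).
  apply: ler_sum => i _.
  have := jensen_powR (P i) (fun j => `|x j 0|) r1 (P0 i) (Prow i) (fun j => normr_ge0 _).
  apply: le_trans.
  apply: ge0_ler_powR; rewrite ?nnegrE ?norm_mulmx_le ?(ltW r0) //.
  by apply: sumr_ge0 => j _; rewrite mulr_ge0.
by rewrite exchange_big; apply: ler_sum => j _; rewrite -mulr_suml Pcol mul1r.
Qed.

End Finite.

Section Infinity.
Local Notation pnorm_oo := (@pnorm R +oo%E k).

Let pnorm_oo_ge0 x : 0 <= pnorm_oo x. Proof. exact: bigmax_ge_id. Qed.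

Let pnorm_oo_ub x i : `|x i 0| <= pnorm_oo x. Proof. exact: le_bigmax. Qed.

Let pnorm_oo_le x c : 0 <= c -> (forall i, `|x i 0| <= c) -> pnorm_oo x <= c.
Proof. by move=> c0 le_c; apply: bigmax_le. Qed.

Lemma pnormD_oo x z : pnorm_oo (x + z) <= pnorm_oo x + pnorm_oo z.
Proof.
apply: pnorm_oo_le => [|i]; first by rewrite addr_ge0.
by rewrite mxE; apply: le_trans (ler_normD _ _) (lerD _ _).
Qed.

Let pnormZ_oo_le c x : pnorm_oo (c *: x) <= `|c| * pnorm_oo x.
Proof.
apply: pnorm_oo_le => [|i]; first by rewrite mulr_ge0.
by rewrite mxE normrM ler_wpM2l.
Qed.

Lemma pnormZ_oo c x : pnorm_oo (c *: x) = `|c| * pnorm_oo x.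
Proof.
apply/le_anti; rewrite pnormZ_oo_le /=.
have [->|c0] := eqVneq c 0; first by rewrite normr0 mul0r pnorm_oo_ge0.
have := pnormZ_oo_le c^-1 (c *: x).
by rewrite scalerA mulVf // scale1r normfV -ler_pdivlMl ?normr_gt0.
Qed.

Lemma pnorm_gt0_oo x : x != 0 -> 0 < pnorm_oo x.
Proof.
case/matrix0Pn => i [j]; rewrite [j]ord1 -normr_gt0 => xi0.
exact: lt_le_trans xi0 (pnorm_oo_ub x i).
Qed.

Lemma pnorm_doubly_stochastic_oo P x : doubly_stochastic P ->
  pnorm_oo (P *m x) <= pnorm_oo x.
Proof.
case=> P0 Prow _; apply: pnorm_oo_le => // i.
apply: le_trans (norm_mulmx_le P x i P0) _.
apply: le_trans (ler_sum _ (fun j _ => ler_wpM2l (P0 i j) (pnorm_oo_ub x j))) _.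
by rewrite -mulr_suml Prow mul1r.
Qed.

End Infinity.

Section General.
Variable p : \bar R.
Hypothesis p1 : (1 <= p)%E.

Lemma pnormD x z : pnorm p (x + z) <= pnorm p x + pnorm p z.
Proof.
case: p p1 => [r||//] p_ge1; last exact: pnormD_oo.
by rewrite lee_fin in p_ge1; exact: pnormD_fin.
Qed.

Lemma pnormZ c x : pnorm p (c *: x) = `|c| * pnorm p x.
Proof.
case: p p1 => [r||//] p_ge1; last exact: pnormZ_oo.
by rewrite lee_fin in p_ge1; exact: pnormZ_fin.
Qed.

Lemma pnorm_gt0 x : x != 0 -> 0 < pnorm p x.
Proof.
case: p p1 => [r||//] p_ge1; last exact: pnorm_gt0_oo.
by rewrite lee_fin in p_ge1; exact: pnorm_gt0_fin.
Qed.

Lemma pnorm_doubly_stochastic P x : doubly_stochastic P -> pnorm p (P *m x) <= pnorm p x.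
Proof.
case: p p1 => [r||//] p_ge1; last exact: pnorm_doubly_stochastic_oo.
by rewrite lee_fin in p_ge1; exact: pnorm_doubly_stochastic_fin.
Qed.

End General.
End PNorm.

Section Blocks.
Context {R : realType} {N n : nat}.

Lemma sum_mxtens_index (F : 'I_(N * n) -> R) :
  \sum_(a < N) \sum_(i < n) F (mxtens_index (a, i)) = \sum_j F j.
Proof.
rewrite pair_big /= (reindex (@mxtens_unindex N n)).
  by apply: eq_bigr => j _; rewrite -surjective_pairing mxtens_unindexK.
by exists (@mxtens_index N n) => j _; rewrite (mxtens_indexK, mxtens_unindexK).
Qed.

Lemma pnorm_blk p (y : 'cV[R]_(N * n)) :
  pnorm p (\col_a pnorm p (blk y a)) = pnorm p y.
Proof.
case: p => [r||//]; rewrite /pnorm.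
  (* [r = 0]: both sides are [_ `^ 0^-1 = 1]. *)
  have [->|r0] := eqVneq r 0; first by rewrite invr0 !powRr0.
  congr (_ `^ _); rewrite -sum_mxtens_index; apply: eq_bigr => a _.
  rewrite mxE ger0_norm ?powR_ge0 // -powRrM mulVf // powRr1 ?sumr_ge0 //.
  by apply: eq_bigr => i _; rewrite mxE.
apply/le_anti/andP; split.
  apply: bigmax_le => [|a _]; first exact: bigmax_ge_id.
  rewrite mxE ger0_norm ?bigmax_ge_id //.
  by apply: bigmax_le => [|i _]; [exact: bigmax_ge_id | rewrite mxE le_bigmax].
apply: bigmax_le => [|j _]; first exact: bigmax_ge_id.
case: (mxtens_indexP j) => a i; apply: le_trans (le_bigmax _ _ a); rewrite mxE.
by apply: le_trans (ler_norm _); rewrite (le_trans _ (le_bigmax _ _ i)) // mxE.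
Qed.

Lemma blk_tens1mx (Q : 'M[R]_n) (x : 'cV[R]_(N * n)) a :
  blk ((1%:M *t Q) *m x) a = Q *m blk x a.
Proof.
apply/matrixP => i j; rewrite !mxE -sum_mxtens_index (bigD1 a) //= [X in _ + X]big1 ?addr0.
  by apply: eq_bigr => k _; rewrite tensmxE !mxE eqxx mulr1n mul1r.
by move=> b ba; rewrite big1 // => k _; rewrite tensmxE mxE eq_sym (negbTE ba) mulr0n !mul0r.
Qed.

Lemma wnorm_pnorm p (Q : 'M[R]_n) (x : 'cV[R]_(N * n)) :
  wnorm p Q x = pnorm p ((1%:M *t Q) *m x).
Proof.
rewrite /wnorm -pnorm_blk; congr (pnorm p _).
by apply/matrixP => a j; rewrite !mxE blk_tens1mx.
Qed.

End Blocks.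

Section DoublyStochasticStep.
Context {R : realType} {k : nat}.
Context {T : 'M[R]_k}.
Local Notation ones := (const_mx 1 : 'cV[R]_k).
Hypothesis T_offdiag : forall i j, i != j -> T i j <= 0.
Hypothesis T_sym : T^T = T.
Hypothesis T_mul1 : T *m ones = 0.

Let sum_row (A : 'M[R]_k) i : \sum_j A i j = (A *m ones) i 0.
Proof. by rewrite mxE; apply: eq_bigr => j _; rewrite mxE mulr1. Qed.

Lemma doubly_stochastic_step : exists2 h, 0 < h & doubly_stochastic (1%:M - h *: T).
Proof.
have c0 : 0 < 1 + \sum_i `|T i i| by rewrite ltr_pwDl // sumr_ge0.
pose h := (1 + \sum_i `|T i i|)^-1.
have h0 : 0 < h by rewrite invr_gt0.
exists h => //.
have P_mul1 : (1%:M - h *: T) *m ones = ones.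
  by rewrite mulmxBl mul1mx -scalemxAl T_mul1 scaler0 subr0.
have P_sym : (1%:M - h *: T)^T = 1%:M - h *: T.
  by rewrite linearB /= trmx1 linearZ /= T_sym.
split=> [i j||j].
- rewrite !mxE; have [<-|ij] := eqVneq i j.
    rewrite mulr1n subr_ge0; apply: le_trans (ler_wpM2l (ltW h0) (ler_norm _)) _.
    rewrite mulrC ler_pdivrMr // mul1r (bigD1 i) //= addrCA ler_wpDr //.
    by rewrite addr_ge0 // sumr_ge0.
  by rewrite mulr0n sub0r oppr_ge0 pmulr_rle0 // T_offdiag.
- by move=> i; rewrite sum_row P_mul1 mxE.
- transitivity (\sum_i (1%:M - h *: T)^T j i); first by apply: eq_bigr => i _; rewrite !mxE.
  by rewrite sum_row P_sym P_mul1 mxE.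
Qed.
End DoublyStochasticStep.

Section TensorLaplacian.
Context {R : realType} {N n : nat} {L : 'M[R]_N} {D : 'M[R]_n}.
Hypothesis D_diag : is_diag_mx D.

Lemma tens_offdiag_le0 : (forall i, 0 < D i i) ->
    (forall a b, a != b -> L a b <= 0) ->
  forall j l, j != l -> (L *t D) j l <= 0.
Proof.
move=> D_gt0 L_offdiag j l; case: (mxtens_indexP j) => a i.
case: (mxtens_indexP l) => b k; rewrite tensmxE.
have [<- jl|ik _] := eqVneq i k; last by rewrite (is_diag_mxP D_diag) ?mulr0.
apply: mulr_le0_ge0 (ltW (D_gt0 i)); apply: L_offdiag.
by move: jl; apply: contra_neq => ->.
Qed.

Lemma tens_sym : L^T = L -> (L *t D)^T = L *t D.
Proof.
by move=> L_sym; rewrite trmx_tens L_sym; case/diag_mxP: D_diag => d ->; rewrite tr_diag_mx.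
Qed.

Lemma tens_mul1 : L *m (const_mx 1 : 'cV_N) = 0 ->
  (L *t D) *m (const_mx 1 : 'cV_(N * n)) = 0.
Proof.
move=> L_mul1; have -> : const_mx 1 = (const_mx 1 : 'cV_N) *t (const_mx 1 : 'cV[R]_n).
  by apply/matrixP => j l; rewrite !mxE mulr1.
by have := tensmx_mul L D (const_mx 1 : 'cV_N) (const_mx 1 : 'cV[R]_n); rewrite L_mul1 tens0mx.
Qed.

Lemma comm_tens1mx {Q : 'M[R]_n} {h : R} : is_diag_mx Q ->
  comm_mx (1%:M *t Q) (1%:M - h *: (L *t D)).
Proof.
move=> /diag_mxP[q ->]; rewrite /comm_mx mulmxBr mulmxBl mulmx1 mul1mx.
rewrite -scalemxAr -scalemxAl !tensmx_mul mul1mx mulmx1.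
by case/diag_mxP: D_diag => d ->; rewrite diag_mx_comm.
Qed.

End TensorLaplacian.

Lemma diag_pos_unitmx {R : realType} {n : nat} (Q : 'M[R]_n) :
  is_diag_mx Q -> (forall i, 0 < Q i i) -> Q \in unitmx.
Proof.
case/diag_mxP => q -> Q_gt0; rewrite unitmxE det_diag unitfE gt_eqF //.
by apply: prodr_gt0 => i _; have := Q_gt0 i; rewrite mxE eqxx mulr1n.
Qed.

Section WNorm.
Context {R : realType} {N n : nat} {p : \bar R} {Q : 'M[R]_n}.
Implicit Types x y : 'cV[R]_(N * n).

Hypothesis p1 : (1 <= p)%E.

Lemma wnormD x y : wnorm p Q (x + y) <= wnorm p Q x + wnorm p Q y.
Proof. by rewrite !wnorm_pnorm mulmxDr pnormD. Qed.

Lemma wnormZ c x : wnorm p Q (c *: x) = `|c| * wnorm p Q x.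
Proof. by rewrite !wnorm_pnorm -scalemxAr pnormZ. Qed.

Lemma wnorm_gt0 x : is_diag_mx Q -> (forall i, 0 < Q i i) -> x != 0 -> 0 < wnorm p Q x.
Proof.
move=> Q_diag Q_gt0 x0; have /matrix0Pn[j [_ _]] := x0.
have : (0 < N * n)%N := leq_ltn_trans (leq0n j) (ltn_ord j).
rewrite muln_gt0 !lt0n => /andP[N0 n0].
have W_unit : (1%:M : 'M[R]_N) *t Q \in unitmx.
  by apply: tensmx_unit; rewrite ?unitmx1 ?diag_pos_unitmx.
rewrite wnorm_pnorm pnorm_gt0 //; apply: contra x0 => /eqP Wx0.
by rewrite -[x](mulKmx W_unit) Wx0 mulmx0.
Qed.

Lemma wnorm_doubly_stochastic P x : doubly_stochastic P -> comm_mx (1%:M *t Q) P ->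
  wnorm p Q (P *m x) <= wnorm p Q x.
Proof. by move=> P_ds WP; rewrite !wnorm_pnorm mulmxA WP -mulmxA pnorm_doubly_stochastic. Qed.

End WNorm.

Section MplusBounds.
Context {R : realType} {N n : nat} {p : \bar R} {Q : 'M[R]_n}.
Context {f : 'cV[R]_(N * n) -> 'cV[R]_(N * n)}.
Hypotheses (p1 : (1 <= p)%E) (Q_diag : is_diag_mx Q) (Q_gt0 : forall i, 0 < Q i i).
Implicit Types u v : 'cV[R]_(N * n).

Let nuD := wnormD (N:=N) (Q:=Q) p1.
Let nuZ := wnormZ (N:=N) (Q:=Q) p1.

Let wnorm_sub_gt0 u v : u != v -> 0 < wnorm p Q (u - v).
Proof. by rewrite -subr_eq0; exact: wnorm_gt0. Qed.

Lemma is_cvg_Mquot u v : u != v -> cvg (Mquot (N:=N) p Q f u v h @[h --> 0^'+]).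
Proof. by move/wnorm_sub_gt0 => uv0; exact (is_cvg_norm_quot nuD nuZ uv0). Qed.

Lemma Mplus_le0 {h} : 0 < h ->
    (forall u v, wnorm p Q (u - v + h *: (f u - f v)) <= wnorm p Q (u - v)) ->
  (Mplus (N:=N) p Q f <= 0)%E.
Proof.
move=> h0 contract; apply/ereal_supP => _ [[u v] /= /wnorm_sub_gt0 uv0 <-].
by rewrite lee_fin; exact: (lim_norm_quot_le0 nuD nuZ uv0 h0).
Qed.

Lemma Mplus_ge0 u v : u != v -> f u = f v -> (0 <= Mplus (N:=N) p Q f)%E.
Proof.
move=> uv fuv; apply: ereal_sup_ubound; exists (u, v) => //=.
have -> : Mquot p Q f u v = fun=> 0.
  apply/funext => t; rewrite /Mquot fuv subrr scaler0 addr0.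
  by rewrite divff ?subrr ?mulr0 // gt_eqF // wnorm_sub_gt0.
by rewrite lim_cst.
Qed.

End MplusBounds.

Theorem proposition5 (R : realType) (n N : nat) (D Q : 'M[R]_n) (p : \bar R)
    (L : 'M[R]_N) :
  (0 < n)%N -> (0 < N)%N ->
  is_diag_mx D -> (forall i, 0 < D i i) ->
  is_diag_mx Q -> (forall i, 0 < Q i i) ->
  (1 <= p)%E ->
  L^T = L ->
  (forall a b : 'I_N, a != b -> L a b <= 0) ->
  L *m (const_mx 1 : 'cV[R]_N) = 0 ->
  let f := fun u : 'cV[R]_(N * n) => - (tensmx L D) *m u in
  (forall u v : 'cV[R]_(N * n), u != v ->
     cvg (Mquot (N:=N) p Q f u v h @[h --> 0^'+])) /\
  Mplus (N:=N) p Q f = 0%E.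
Proof.
move=> n0 N0 D_diag D_gt0 Q_diag Q_gt0 p1 L_sym L_offdiag L_mul1 f.
split=> [u v|]; first exact: is_cvg_Mquot.
have [h h0 P_ds] := doubly_stochastic_step (tens_offdiag_le0 D_diag D_gt0 L_offdiag)
  (tens_sym D_diag L_sym) (tens_mul1 L_mul1).
apply/le_anti/andP; split.
  apply: (Mplus_le0 p1 Q_diag Q_gt0 h0) => u v.
  have -> : u - v + h *: (f u - f v) = (1%:M - h *: (L *t D)) *m (u - v).
    by rewrite /f -mulmxBr mulNmx scalerN mulmxBl mul1mx scalemxAl.
  exact: wnorm_doubly_stochastic p1 _ _ P_ds (comm_tens1mx D_diag Q_diag).
pose ones := const_mx 1 : 'cV[R]_(N * n).
apply: (Mplus_ge0 p1 Q_diag Q_gt0 ones 0).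
  have Nn : (0 < N * n)%N by rewrite muln_gt0 N0 n0.
  by apply/matrix0Pn; exists (Ordinal Nn), 0; rewrite !mxE oner_eq0.
by rewrite /f !mulNmx tens_mul1 // mulmx0.
Qed.
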